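(* Let $\mathrm{X},\mathrm{Y}$ be locally compact Hausdorff spaces, let $F(\mathrm{X})\subset C_0(\mathrm{X})_+$ contain sufficiently many functions to peak on compact $G_\delta$ subsets of $\mathrm{X}$, and let $T:F(\mathrm{X})\to C_0(\mathrm{Y})_+$ satisfy $\|Tf_1+\cdots+Tf_n\|=\|f_1+\cdots+f_n\|$ for all $n\in\mathbb{N}$ and $f_1,\dots,f_n\in F(\mathrm{X})$. Then for every $x_0\in\mathrm{X}$, every $f\in F(\mathrm{X})$ and every $y\in\operatorname{psupp}_T(x_0)$ we have $(Tf)(y)\le f(x_0)$.
   Context: $C_0(\mathrm{X})_+$: nonnegative continuous functions vanishing at infinity, sup-norm. $\operatorname{pk}(f)=\{x: f(x)=\|f\|\}$. $F(\mathrm{X})$ ''contains sufficiently many functions to peak on compact $G_\delta$ subsets'' if every nonempty compact $G_\delta$ set $K\subset\mathrm{X}$ equals $\operatorname{pk}(f)$ for some $f\in F(\mathrm{X})$. For $x\in\mathrm{X}$: $\operatorname{PKat}(x)=\{g\in F(\mathrm{X}): g(x)=\|g\|\}$ and $\operatorname{psupp}_T(x)=\bigcap_{h\in\operatorname{PKat}(x)}\operatorname{pk}(Th)\subset\mathrm{Y}$. *)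

From HB Require Import structures.
From mathcomp Require Import all_boot all_order all_algebra.
From mathcomp Require Import all_classical all_reals all_analysis.
Set Implicit Arguments. Unset Strict Implicit. Unset Printing Implicit Defensive.
Import Order.TTheory GRing.Theory Num.Theory numFieldNormedType.Exports.
Local Open Scope classical_set_scope.
Local Open Scope ring_scope.

Definition locally_compact_space (X : topologicalType) : Prop :=
  forall x : X, exists2 K : set X, compact K & nbhs x K.

Definition C0plus (R : realType) (X : topologicalType) : set (X -> R) :=
  [set f : X -> R | continuous f /\ (forall x, 0 <= f x) /\
     (forall eps : R, 0 < eps ->
        exists2 K : set X, compact K & forall x, ~ K x -> `|f x| < eps)].

Definition supnorm (R : realType) (X : Type) (f : X -> R) : R :=
  sup [set `|f x| | x in [set: X]].

Definition pk (R : realType) (X : Type) (f : X -> R) : set X :=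
  [set x | f x = supnorm f].

Definition Gdelta (X : topologicalType) (K : set X) : Prop :=
  exists U : nat -> set X, (forall n, open (U n)) /\ K = \bigcap_n U n.

Definition peaks_on_compact_Gdelta (R : realType) (X : topologicalType)
  (F : set (X -> R)) : Prop :=
  forall K : set X, K !=set0 -> compact K -> Gdelta K ->
    exists2 f, F f & pk f = K.

Definition PKat (R : realType) (X : Type) (F : set (X -> R)) (x : X) :
  set (X -> R) := [set g | F g /\ g x = supnorm g].

Definition psupp (R : realType) (X Y : Type) (F : set (X -> R))
  (T : (X -> R) -> (Y -> R)) (x : X) : set Y :=
  \bigcap_(h in PKat F x) pk (T h).

(* Suppose T f y > f x0 for some y in psupp_T(x0) and pick c strictly between.
   The open set V = {f < c} contains x0; by complete regularity of the locally
   compact Hausdorff space X there is a compact G_delta set K with x0 in K and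
   K inside V (the zero set of an Urysohn function), so some h in F peaks
   exactly on K.  Then h peaks at x0, hence y peaks for T h and
   T h y = ||T h|| = ||h|| = M.  Since h vanishes at infinity and attains M
   only inside V, it stays below M - d off V for some d > 0.  For n with
   n d > ||f|| the estimate  n h + f <= n M + c  holds everywhere, while
   n T h + T f  reaches  n M + T f y > n M + c  at y, contradicting
   ||n T h + T f|| = ||n h + f||. *)

From HB Require Import structures.
From mathcomp Require Import all_boot all_order all_algebra.
From mathcomp Require Import all_classical all_reals all_analysis.
From mathcomp Require Import lra.
Import Order.TTheory GRing.Theory Num.Theory numFieldNormedType.Exports.
Local Open Scope classical_set_scope.
Local Open Scope ring_scope.

(* A function of C_0(X)_+ is bounded: it is small off a compact set, and
   bounded on that compact set by continuity. *)
Lemma C0plus_bounded {R : realType} {X : topologicalType} {g : X -> R} :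
  C0plus g -> exists B : R, forall x, `|g x| <= B.
Proof.
move=> [cg [_ gv]].
have [K cK HK] := gv 1 ltr01.
have cgK : compact (g @` K).
  by apply: continuous_compact => //; exact: continuous_subspaceT.
have [r [_ Hr]] := compact_bounded cgK.
exists (Num.max (r + 1) 1) => x; rewrite le_max.
have [Kx|nKx] := pselect (K x).
  by apply/orP; left; apply: (Hr (r + 1)); [lra | exists x].
by apply/orP; right; apply/ltW/HK.
Qed.

Lemma le_supnorm {R : realType} {X : Type} {g : X -> R} {B : R} (x : X) :
  (forall z, `|g z| <= B) -> `|g x| <= supnorm g.
Proof.
move=> HB; apply: sup_upper_bound; last by exists x.
split; first by exists `|g x|, x.
by exists B => _ [z _ <-].
Qed.

Lemma supnorm_le {R : realType} {X : Type} {g : X -> R} {B : R} (x : X) :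
  (forall z, `|g z| <= B) -> supnorm g <= B.
Proof.
move=> HB; apply: ge_sup; first by exists `|g x|, x.
by move=> _ [z _ <-].
Qed.

Lemma C0plus_le_supnorm {R : realType} {X : topologicalType} {g : X -> R} :
  C0plus g -> forall x, g x <= supnorm g.
Proof.
move=> Cg x; have [B HB] := C0plus_bounded Cg.
by have := le_supnorm x HB; rewrite ger0_norm //; case: Cg => _ [].
Qed.

Lemma C0plus_combination_le_supnorm {R : realType} {X : topologicalType}
    {a b : X -> R} (n : nat) (x : X) : C0plus a -> C0plus b ->
  a x *+ n + b x <= supnorm (fun z => a z *+ n + b z).
Proof.
move=> Ca Cb; have [[_ [a0 _]] [_ [b0 _]]] := (Ca, Cb).
have [[Ba HBa] [Bb HBb]] := (C0plus_bounded Ca, C0plus_bounded Cb).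
have := @le_supnorm _ _ (fun z => a z *+ n + b z) (Ba *+ n + Bb) x.
rewrite ger0_norm ?addr_ge0 ?mulrn_wge0 //; apply => z.
apply: le_trans (ler_normD _ _) _; rewrite normrMn.
by apply: lerD => //; rewrite lerMn2r HBa orbT.
Qed.

Lemma compact_zero_set_in_nbhs (R : realType) {X : topologicalType} :
  locally_compact_space X -> hausdorff_space X ->
  forall (V : set X) (x0 : X), open V -> V x0 ->
  exists g : X -> R, [/\ continuous g, forall x, 0 <= g x, g x0 = 0,
    compact [set x | g x = 0] & [set x | g x = 0] `<=` V].
Proof.
move=> hlc hH V x0 oV Vx0.
have [C cC nC] := hlc x0.
have clB : closed (~` (V `&` C°)).
  by apply: open_closedC; apply: openI => //; exact: open_interior.
have nBx0 : ~ (~` (V `&` C°)) x0 by move/(_ (conj Vx0 nC)).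
have lcX : locally_compact [set: X].
  move=> x _; have [Cx cCx nCx] := hlc x; exists Cx; first by rewrite withinET.
  by split => //; exact: compact_closed.
have /(@uniform_separatorP _ R) [g [cg g01 gx0 gB]] :=
  @locally_compact_completely_regular X R lcX hH _ _ clB nBx0.
have g0 x : 0 <= g x.
  by have /andP[] := g01 (g x) (ex_intro2 _ _ x I erefl).
have zero_in x : g x = 0 -> (V `&` C°) x.
  move=> gx; apply: contrapT => nx.
  have : g x = 1 by apply: gB; exists x.
  by rewrite gx => /eqP; rewrite eq_sym oner_eq0.
exists g; split => //; first by apply: gx0; exists x0.
  apply: (subclosed_compact _ cC); last first.
    by move=> x /zero_in [_]; exact: interior_subset.
  by apply: (@preimage_closed _ _ g [set 0]) => [z _|]; [exact: cg | exact: closed_eq].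
by move=> x /zero_in [].
Qed.

(* The zero set of a nonnegative continuous real function is a G_delta set:
   it is the intersection of the open sets {g < 1/(n+1)}. *)
Lemma zero_set_Gdelta {R : realType} {X : topologicalType} {g : X -> R} :
  continuous g -> (forall x, 0 <= g x) -> Gdelta [set x | g x = 0].
Proof.
move=> cg g0; exists (fun n => g @^-1` [set r | r < n.+1%:R^-1]); split.
  by move=> n; apply: open_comp => [z _|]; [exact: cg | exact: open_lt].
apply/seteqP; split; first by move=> x gx n _; rewrite /= gx invr_gt0.
move=> x Hx; apply/eqP; rewrite eq_le g0 andbT leNgt; apply/negP => gx.
have := truncnS_gt (g x)^-1.
rewrite invf_plt ?posrE ?ltr0n ?invr_gt0 // => lt_inv.
by have := lt_trans (Hx _ I) lt_inv; rewrite ltxx.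
Qed.

(* Off V the values of h on the compact
   set where h >= ||h||/2 form a compact set missing ||h||. *)
Lemma peak_gap {R : realType} {X : topologicalType} {h : X -> R} {V : set X} :
  C0plus h -> open V -> pk h `<=` V ->
  exists2 d : R, 0 < d & forall x, ~ V x -> h x <= supnorm h - d.
Proof.
move=> Ch oV pkV; set M := supnorm h.
have hle := C0plus_le_supnorm Ch.
have [ch [h0 hv]] := Ch.
have peak_in x : h x = M -> V x by move=> hx; exact: pkV.
have [M0|M0] := leP M 0.
  exists 1 => // x nVx; exfalso; apply/nVx/peak_in.
  by apply/eqP; rewrite eq_le hle (le_trans M0 (h0 x)).
have M20 : 0 < M / 2 by rewrite divr_gt0.
have [K cK HK] := hv (M / 2) M20.
pose E := h @` (K `&` ~` V).
have cE : compact E.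
  apply: continuous_compact; first exact: continuous_subspaceT.
  by apply: compact_closedI => //; exact: open_closedC.
have nEM : ~ E M by case=> x [_ nVx] /peak_in.
have : open (~` E) by apply: closed_openC; apply: compact_closed cE; exact: Rhausdorff.
rewrite openE => /(_ M nEM) /nbhs_ballP [e e0 He].
exists (Num.min e (M / 2)); first by rewrite lt_min e0 M20.
have m1 : Num.min e (M / 2) <= e by rewrite ge_min lexx.
have m2 : Num.min e (M / 2) <= M / 2 by rewrite ge_min lexx orbT.
move=> x nVx; have [Kx|nKx] := pselect (K x).
  have : ~ ball M e (h x) by move=> /He; apply; exists x.
  rewrite /ball /= ger0_norm ?subr_ge0 ?hle // => /negP; rewrite -leNgt; lra.
by have := HK x nKx; rewrite ger0_norm //; lra.
Qed.

Lemma combination_estimate (R : realType) (hz fz M d c Bf : R) (n : nat) (inV : Prop) :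
  0 < c -> hz <= M -> (~ inV -> hz <= M - d) -> (inV -> fz < c) ->
  fz <= Bf -> Bf < n%:R * d -> hz *+ n + fz <= M *+ n + c.
Proof.
move=> c0 hM hgap fc fB nd; have hMn : hz *+ n <= M *+ n by rewrite lerMn2r hM orbT.
have [Vz|nVz] := pselect inV; first by have := fc Vz; lra.
have : hz *+ n <= (M - d) *+ n by rewrite lerMn2r hgap ?orbT.
by move: nd; rewrite mulr_natl mulrnBl; lra.
Qed.

Section NormPreservation.
Context {R : realType} {X Y : Type} {F : set (X -> R)} {T : (X -> R) -> (Y -> R)}.
Hypothesis hnorm : forall s : seq (X -> R), (forall f, f \in s -> F f) ->
  supnorm (fun y => \sum_(f <- s) T f y) = supnorm (fun x => \sum_(f <- s) f x).

Lemma supnorm_T {h : X -> R} : F h -> supnorm (T h) = supnorm h.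
Proof.
move=> Fh; have := @hnorm [:: h] (fun g => ltac:(by rewrite inE => /eqP ->)).
by under eq_fun do rewrite big_seq1; under [in RHS]eq_fun do rewrite big_seq1.
Qed.

Lemma supnorm_T_combination {h f : X -> R} (n : nat) : F h -> F f ->
  supnorm (fun y => T h y *+ n + T f y) = supnorm (fun x => h x *+ n + f x).
Proof.
move=> Fh Ff; pose s := nseq n h ++ [:: f].
have Fs k : k \in s -> F k.
  by rewrite mem_cat mem_nseq inE => /orP [/andP [_ /eqP->]| /eqP->].
have := hnorm _ Fs; rewrite /s.
by under eq_fun do rewrite big_cat big_nseq iter_addr_0 big_seq1;
   under [in RHS]eq_fun do rewrite big_cat big_nseq iter_addr_0 big_seq1.
Qed.

End NormPreservation.

Theorem mainTheorem17 (R : realType) (X Y : topologicalType)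
  (hlcX : locally_compact_space X) (hHX : hausdorff_space X)
  (hlcY : locally_compact_space Y) (hHY : hausdorff_space Y)
  (F : set (X -> R)) (hF : F `<=` @C0plus R X)
  (hpeak : peaks_on_compact_Gdelta F)
  (T : (X -> R) -> (Y -> R)) (hT : forall f, F f -> @C0plus R Y (T f))
  (hnorm : forall s : seq (X -> R), (forall f, f \in s -> F f) ->
     supnorm (fun y => \sum_(f <- s) T f y) = supnorm (fun x => \sum_(f <- s) f x)) :
  forall (x0 : X) (f : X -> R) (y : Y), F f -> psupp F T x0 y -> T f y <= f x0.
Proof.
move=> x0 f y Ff Py; rewrite leNgt; apply/negP => lt_fy.
have [cf [f0 _]] := hF _ Ff.
pose c := (f x0 + T f y) / 2.
have [c1 c2] : f x0 < c /\ c < T f y by rewrite /c; split; lra.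
pose V := f @^-1` [set r | r < c].
have oV : open V by apply: open_comp => [z _|]; [exact: cf | exact: open_lt].
have [g [cg g0 gx0 cK KV]] := compact_zero_set_in_nbhs R hlcX hHX _ _ oV c1.
have [h Fh pkh] := hpeak _ (ex_intro _ x0 gx0) cK (zero_set_Gdelta cg g0).
have hx0 : h x0 = supnorm h by have : pk h x0 by rewrite pkh.
have Thy : T h y = supnorm h by rewrite (Py h (conj Fh hx0)) (supnorm_T hnorm Fh).
have pkV : pk h `<=` V by rewrite pkh.
have [d d0 hgap] := peak_gap (hF _ Fh) oV pkV.
have [_ [h0 _]] := hF _ Fh.
have [Bf HBf] := C0plus_bounded (hF _ Ff).
have fB z : f z <= Bf by rewrite -(ger0_norm (f0 z)).
have := truncnS_gt (Bf / d); set n := (Num.truncn _).+1.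
rewrite ltr_pdivrMr // => nd.
have ub : supnorm (fun x => h x *+ n + f x) <= supnorm h *+ n + c.
  apply: (supnorm_le x0) => z; rewrite ger0_norm ?addr_ge0 ?mulrn_wge0 //.
  exact: combination_estimate (le_lt_trans (f0 x0) c1)
    (C0plus_le_supnorm (hF _ Fh) z) (hgap z) id (fB z) nd.
have lb := C0plus_combination_le_supnorm n y (hT _ Fh) (hT _ Ff).
rewrite (supnorm_T_combination hnorm _ Fh Ff) Thy in lb.
by have := le_trans lb ub; rewrite lerD2l leNgt c2.
Qed.
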